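(* Let $\mathcal{X}$ be a real Hilbert space, let $\mathbb{A},\mathbb{B},\mathbb{C}:\mathcal{X}\to 2^{\mathcal{X}}$ be maximal monotone operators with $\mathbb{C}$ $\beta$-cocoercive ($\beta>0$), let $\gamma\in(0,2\beta]$, and let $$T=\mathbb{J}_{\gamma\mathbb{C}}\circ\big(\mathbb{J}_{\gamma \mathbb{A}}\circ(2\mathbb{J}_{\gamma \mathbb{B}}-I-\gamma \mathbb{C}\mathbb{J}_{\gamma \mathbb{B}})+\gamma \mathbb{C}\mathbb{J}_{\gamma \mathbb{B}}\big)+ (I-\mathbb{J}_{\gamma \mathbb{B}}).$$ Assume $T$ is $a$-averaged with $a=\frac{2\beta}{4\beta-\gamma}<1$. Let $z^0\in\mathcal{X}$ and let $(z^j)_{j\ge0}$ be generated by: for $k=0,1,\dots$, $x^k_{\mathbb{B}}=\mathbb{J}_{\gamma\mathbb{B}}(z^k)$, $x^k_{\mathbb{A}}=\mathbb{J}_{\gamma\mathbb{A}}(2x^k_{\mathbb{B}}-z^k-\gamma\mathbb{C}x^k_{\mathbb{B}})$, $x^k_{\mathbb{C}}=\mathbb{J}_{\gamma\mathbb{C}}(x^k_{\mathbb{A}}+\gamma\mathbb{C}x^k_{\mathbb{B}})$, $z^{k+1}=z^k+\lambda_k(x^k_{\mathbb{C}}-x^k_{\mathbb{B}})$, with $\lambda_k\in(0,(4\beta-\gamma)/(2\beta))$. Let $z^*$ be a fixed point of $T$ and $x^*=\mathbb{J}_{\gamma\mathbb{B}}(z^* )$. Then $(x^j_{\mathbb{A}})_{j\ge0}$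 and $(x^j_{\mathbb{B}})_{j\ge0}$ are contained in the closed ball $\overline{B}\big(x^*,(1+\gamma/\beta)\|z^0-z^*\|\big)$.
   Context: $\mathbb{J}_M=(I+M)^{-1}$ is the resolvent of $M$. $\mathbb{C}$ is $\beta$-cocoercive if $\langle u-v,x-y\rangle\ge\beta\|u-v\|^2$ for all $u\in\mathbb{C}x,v\in\mathbb{C}y$. A map $T$ is $a$-averaged if $T=(1-a)I+aN$ for some nonexpansive $N$. *)

From HB Require Import structures.
From mathcomp Require Import all_boot all_order all_algebra.
From mathcomp Require Import all_classical all_reals all_analysis.
Set Implicit Arguments. Unset Strict Implicit. Unset Printing Implicit Defensive.
Import Order.TTheory GRing.Theory Num.Theory.
Import numFieldNormedType.Exports.
Local Open Scope ring_scope.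
Local Open Scope classical_set_scope.

(* A real Hilbert space: a complete normed space V over R together with a
   symmetric bilinear form whose induced norm is the norm of V. *)
Definition is_inner_product (R : realType) (V : completeNormedModType R)
    (ip : V -> V -> R) : Prop :=
  [/\ forall x y, ip x y = ip y x,
      forall a x y z, ip (a *: x + y) z = a * ip x z + ip y z
    & forall x, ip x x = `|x| ^+ 2].

Definition monotone (R : realType) (V : completeNormedModType R)
    (ip : V -> V -> R) (A : V -> set V) : Prop :=
  forall x y u v, A x u -> A y v -> 0 <= ip (u - v) (x - y).

Definition maximal_monotone (R : realType) (V : completeNormedModType R)
    (ip : V -> V -> R) (A : V -> set V) : Prop :=
  monotone ip A /\
  forall B : V -> set V, monotone ip B ->
    (forall x u, A x u -> B x u) -> forall x u, B x u -> A x u.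

Definition cocoercive (R : realType) (V : completeNormedModType R)
    (ip : V -> V -> R) (beta : R) (A : V -> set V) : Prop :=
  forall x y u v, A x u -> A y v -> beta * `|u - v| ^+ 2 <= ip (u - v) (x - y).

(* J is the resolvent (I + g A)^{-1}, i.e. J x = p  iff  x \in p + g A p. *)
Definition is_resolvent (R : realType) (V : completeNormedModType R)
    (A : V -> set V) (g : R) (J : V -> V) : Prop :=
  forall x p, J x = p <-> exists u, A p u /\ x - p = g *: u.

Definition nonexpansive (R : realType) (V : completeNormedModType R)
    (N : V -> V) : Prop :=
  forall x y, `|N x - N y| <= `|x - y|.

Definition averaged (R : realType) (V : completeNormedModType R)
    (a : R) (T : V -> V) : Prop :=
  exists N : V -> V, nonexpansive N /\ forall x, T x = (1 - a) *: x + a *: N x.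

From Pilot Require Import Defs.
From HB Require Import structures.
From mathcomp Require Import all_boot all_order all_algebra.
From mathcomp Require Import all_classical all_reals all_analysis.
From mathcomp Require Import lra.
Set Implicit Arguments. Unset Strict Implicit. Unset Printing Implicit Defensive.
Import Order.TTheory GRing.Theory Num.Theory.
Local Open Scope ring_scope.

(* The fixed point zs of T yields xs = J_{gB} zs and the unique cs in C xs, and
   T zs = zs forces J_{gA} (2 xs - zs - g cs) = xs.  The point cs exists because a
   cocoercive operator with a total resolvent J has full domain: w |-> x + (w - J w)
   is a contraction, and its fixed point p satisfies J p = x.

   Since T = (1 - a) I + a N with N nonexpansive and lambda_k a < 1, each error
   z^{k+1} - zs is a convex combination of z^k - zs and N z^k - N zs, so
   |z^k - zs| <= |z^0 - zs|.  Resolvents of monotone operators and their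
   reflections 2 J - I are nonexpansive and C is (1/beta)-Lipschitz, whence
   |x_B^k - xs| <= |z^k - zs| and
   |x_A^k - xs| <= |2 (x_B^k - xs) - (z^k - zs)| + g |c^k - cs|
               <= (1 + g/beta) |z^k - zs|. *)

Lemma subrACA (W : zmodType) (a b c d : W) : (a - b) - (c - d) = (a - c) - (b - d).
Proof. by rewrite !opprD !opprK addrACA. Qed.

Section NormedSpace.
Variables (R : realType) (V : completeNormedModType R).

Lemma contraction_fixed_point (f : V -> V) (q : R) :
  0 <= q -> q < 1 -> (forall x y, `|f x - f y| <= q * `|x - y|) ->
  exists p, f p = p.
Proof.
move=> q_ge0 q_lt1 f_contr.
have [||| p _ fp] := @banach_fixed_point R V setT (totalfun_ setT f).
- by exists (NngNum q_ge0); split => //= -[x y] _; exact: f_contr.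
- exact: closedT.
- by exists 0.
by exists p.
Qed.

Lemma averaged_fixed_point (a : R) (N : V -> V) (z : V) :
  a != 0 -> z = (1 - a) *: z + a *: N z -> N z = z.
Proof.
move=> a_neq0 zE; apply: (scalerI a_neq0).
have := congr1 (fun v => v - (1 - a) *: z) zE.
by rewrite addrAC subrr add0r scalerBl scale1r subKr => ->.
Qed.

Lemma relaxed_step_le (s : R) (N : V -> V) (z zs : V) :
  nonexpansive N -> N zs = zs -> 0 <= s <= 1 ->
  `|z + s *: (N z - z) - zs| <= `|z - zs|.
Proof.
move=> N_ne Nzs /andP[s_ge0 s_le1].
have -> : z + s *: (N z - z) - zs = (1 - s) *: (z - zs) + s *: (N z - N zs).
  rewrite Nzs scalerBl scale1r -[RHS]addrA [- _ + _]addrC -scalerBr.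
  by rewrite opprB addrA subrK addrAC.
apply: (le_trans (ler_normD _ _)); rewrite !normrZ !ger0_norm ?subr_ge0 //.
by have := N_ne z zs; have := normr_ge0 (z - zs); nra.
Qed.

Lemma averaged_relaxed_iterates_le (a : R) (T : V -> V) (z : nat -> V)
    (lambda : nat -> R) (zs : V) :
  averaged a T -> 0 < a -> T zs = zs ->
  (forall k, z k.+1 = z k + lambda k *: (T (z k) - z k)) ->
  (forall k, 0 < lambda k < a^-1) ->
  forall k, `|z k - zs| <= `|z 0 - zs|.
Proof.
move=> [N [N_ne TE]] a_gt0 Tzs zS lam_bd.
have Nzs : N zs = zs.
  by apply: (averaged_fixed_point (lt0r_neq0 a_gt0)); rewrite -TE Tzs.
have TzE x : T x - x = a *: (N x - x).
  by rewrite TE scalerBl scale1r scalerBr addrAC [_ - x]addrAC subrr add0r addrC.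
move=> k; apply: (nonincreasing_seqP (fun k => `|z k - zs|)).1 (leq0n k) => {}k.
rewrite zS TzE scalerA; apply: relaxed_step_le => //.
have /andP[lam_gt0 lam_lt] := lam_bd k.
by rewrite (ltW (mulr_gt0 lam_gt0 a_gt0)) /= -ler_pdivlMr // div1r ltW.
Qed.

End NormedSpace.

Section InnerProductSpace.
Variables (R : realType) (V : completeNormedModType R) (ip : V -> V -> R).
Hypothesis ip_inner : is_inner_product ip.

Lemma ipC x y : ip x y = ip y x.
Proof. by case: ip_inner. Qed.

Lemma ipDl x y z : ip (x + y) z = ip x z + ip y z.
Proof. by case: ip_inner => _ ipl _; rewrite -[x]scale1r ipl mul1r scale1r. Qed.

Lemma ipDr x y z : ip x (y + z) = ip x y + ip x z.
Proof. by rewrite ipC ipDl ![ip _ x]ipC. Qed.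

Lemma ip0l z : ip 0 z = 0.
Proof. by have := ipDl 0 0 z; rewrite addr0; lra. Qed.

Lemma ipZl a x z : ip (a *: x) z = a * ip x z.
Proof. by case: ip_inner => _ ipl _; rewrite -[a *: x]addr0 ipl ip0l addr0. Qed.

Lemma ipZr a x z : ip z (a *: x) = a * ip z x.
Proof. by rewrite ipC ipZl ipC. Qed.

Lemma sqr_normDZ x y s :
  `|x + s *: y| ^+ 2 = `|x| ^+ 2 + 2 * s * ip x y + s ^+ 2 * `|y| ^+ 2.
Proof.
case: ip_inner => _ _ ipxx; rewrite -!ipxx.
by rewrite !ipDl !ipDr !ipZl !ipZr [ip y x]ipC expr2; lra.
Qed.

Lemma resolventE (A : V -> set V) (g : R) (J : V -> V) :
  is_resolvent A g J -> forall w, exists2 u, A (J w) u & w - J w = g *: u.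
Proof. by move=> JA w; have [u []] := (JA w (J w)).1 erefl; exists u. Qed.

Lemma resolvent_subE (A : V -> set V) (g : R) (J : V -> V) :
  is_resolvent A g J -> forall w w', exists u u',
  [/\ A (J w) u, A (J w') u' & w - w' = J w - J w' + g *: (u - u')].
Proof.
move=> JA w w'; have [u Au wE] := resolventE JA w; have [u' Au' w'E] := resolventE JA w'.
by exists u, u'; split; rewrite // scalerBr -wE -w'E subrACA [RHS]addrC subrK.
Qed.

Lemma resolvent_nonexpansive (A : V -> set V) (g : R) (J : V -> V) :
  Defs.monotone ip A -> 0 <= g -> is_resolvent A g J -> nonexpansive J.
Proof.
move=> mA g_ge0 JA w w'; have [u [u' [Au Au' ->]]] := resolvent_subE JA w w'.
have := mA _ _ _ _ Au Au'; rewrite ipC => mono.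
rewrite -ler_sqr ?nnegrE // sqr_normDZ.
by have := sqr_ge0 g; have := sqr_ge0 `|u - u'|; nra.
Qed.

Lemma reflected_resolvent_nonexpansive (A : V -> set V) (g : R) (J : V -> V) :
  Defs.monotone ip A -> 0 <= g -> is_resolvent A g J ->
  nonexpansive (fun w => 2 *: J w - w).
Proof.
move=> mA g_ge0 JA w w' /=; have [u [u' [Au Au' wE]]] := resolvent_subE JA w w'.
have := mA _ _ _ _ Au Au'; rewrite ipC => mono.
rewrite subrACA -scalerBr wE scaler_nat mulr2n opprD addrA addrK -scaleNr.
rewrite -ler_sqr ?nnegrE // !sqr_normDZ sqrrN.
by have := sqr_ge0 g; have := sqr_ge0 `|u - u'|; nra.
Qed.

Section Cocoercive.
Variables (beta : R) (C : V -> set V).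
Hypotheses (beta_gt0 : 0 < beta) (C_coco : cocoercive ip beta C).

Lemma cocoercive_lipschitz x y u v :
  C x u -> C y v -> beta * `|u - v| <= `|x - y|.
Proof.
move=> Cu Cv; have := C_coco Cu Cv; rewrite ipC => coco.
rewrite -ler_sqr ?nnegrE ?(mulr_ge0 (ltW beta_gt0)) //.
have := sqr_ge0 `|x - y + (- beta) *: (u - v)|; rewrite sqr_normDZ.
by have := mulr_ge0 (ltW beta_gt0) (eqbRL (subr_ge0 _ _) coco); nra.
Qed.

Lemma cocoercive_single_valued x u v : C x u -> C x v -> u = v.
Proof.
move=> Cu Cv; have := cocoercive_lipschitz Cu Cv.
by rewrite subrr normr0 pmulr_rle0 // normr_le0 subr_eq0 => /eqP.
Qed.

Variables (g : R) (J : V -> V).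
Hypotheses (g_gt0 : 0 < g) (JC : is_resolvent C g J).

Lemma cocoercive_resolvent_contraction w w' :
  `|(w - J w) - (w' - J w')| <= Num.sqrt (g / (g + 2 * beta)) * `|w - w'|.
Proof.
have [u [u' [Cu Cu' wE]]] := resolvent_subE JC w w'.
have := C_coco Cu Cu'; rewrite ipC => coco.
rewrite subrACA wE addrC addKr.
have gb_gt0 : 0 < g + 2 * beta by move: g_gt0 beta_gt0; lra.
have r_ge0 : 0 <= g / (g + 2 * beta) by rewrite divr_ge0 ?ltW.
rewrite -ler_sqr ?nnegrE ?mulr_ge0 ?sqrtr_ge0 // exprMn sqr_sqrtr //.
rewrite sqr_normDZ normrZ gtr0_norm // mulrAC ler_pdivlMr //.
have := mulr_ge0 (ltW g_gt0) (eqbRL (subr_ge0 _ _) coco).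
by have := sqr_ge0 `|J w - J w'|; have := sqr_ge0 `|u - u'|; move: g_gt0 beta_gt0; nra.
Qed.

Lemma cocoercive_resolvent_total x : exists u, C x u.
Proof.
have gb_gt0 : 0 < g + 2 * beta by move: g_gt0 beta_gt0; lra.
have q_lt1 : Num.sqrt (g / (g + 2 * beta)) < 1.
  by rewrite -[X in _ < X]sqrtr1 ltr_sqrt // ltr_pdivrMr // mul1r; move: beta_gt0; lra.
have [|p fp] := contraction_fixed_point (f := fun w => x + (w - J w)) (sqrtr_ge0 _) q_lt1.
  by move=> w w'; rewrite opprD addrACA subrr add0r; exact: cocoercive_resolvent_contraction.
have -> : x = J p by move/(canRL (addrK _)): fp; rewrite subKr.
by have [u Cu _] := resolventE JC p; exists u.
Qed.

Lemma resolvent_shift_eq x c y : C x c -> J (y + g *: c) = x -> y = x.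
Proof.
move=> Cc /(JC _ _).1 [u [Cu]]; rewrite (cocoercive_single_valued Cu Cc) addrAC.
by rewrite -[RHS]add0r => /addIr /subr0_eq.
Qed.

End Cocoercive.

Lemma forward_reflected_resolvent_le (A B C : V -> set V) (beta g : R)
    (JA JB : V -> V) (w w' c c' : V) :
  Defs.monotone ip A -> Defs.monotone ip B -> 0 < beta -> cocoercive ip beta C ->
  0 < g -> is_resolvent A g JA -> is_resolvent B g JB ->
  C (JB w) c -> C (JB w') c' ->
  `|JA (2 *: JB w - w - g *: c) - JA (2 *: JB w' - w' - g *: c')|
    <= (1 + g / beta) * `|w - w'|.
Proof.
move=> mA mB beta_gt0 C_coco g_gt0 JA_res JB_res Cc Cc'.
apply: le_trans (resolvent_nonexpansive mA (ltW g_gt0) JA_res _ _) _.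
rewrite subrACA -scalerBr; apply: le_trans (ler_normB _ _) _.
have refl_le := reflected_resolvent_nonexpansive mB (ltW g_gt0) JB_res w w'.
have JB_le := resolvent_nonexpansive mB (ltW g_gt0) JB_res w w'.
have C_le := cocoercive_lipschitz beta_gt0 C_coco Cc Cc'.
rewrite normrZ gtr0_norm //.
have -> : g * `|c - c'| = g / beta * (beta * `|c - c'|).
  by rewrite mulrA divfK ?lt0r_neq0.
rewrite mulrDl mul1r lerD // ler_wpM2l ?(divr_ge0 (ltW g_gt0) (ltW beta_gt0)) //.
exact: le_trans C_le JB_le.
Qed.

End InnerProductSpace.

Theorem lemma3 (R : realType) (V : completeNormedModType R)
  (ip : V -> V -> R) (Hip : is_inner_product ip)
  (A B C : V -> set V) (beta gamma : R)
  (JA JB JC T : V -> V)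
  (z xA xB xC c : nat -> V) (lambda : nat -> R) (zstar : V) :
  maximal_monotone ip A -> maximal_monotone ip B -> maximal_monotone ip C ->
  0 < beta -> cocoercive ip beta C ->
  0 < gamma -> gamma <= 2 * beta ->
  is_resolvent A gamma JA -> is_resolvent B gamma JB -> is_resolvent C gamma JC ->
  (* T = J_{gC} o (J_{gA} o (2 J_{gB} - I - g C J_{gB}) + g C J_{gB}) + (I - J_{gB}) *)
  (forall w cw, C (JB w) cw ->
     T w = JC (JA (2 *: JB w - w - gamma *: cw) + gamma *: cw) + (w - JB w)) ->
  2 * beta / (4 * beta - gamma) < 1 ->
  averaged (2 * beta / (4 * beta - gamma)) T ->
  (* the iteration; c k is the (unique) element of C (xB k) *)
  (forall k, xB k = JB (z k)) ->
  (forall k, C (xB k) (c k)) ->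
  (forall k, xA k = JA (2 *: xB k - z k - gamma *: c k)) ->
  (forall k, xC k = JC (xA k + gamma *: c k)) ->
  (forall k, z k.+1 = z k + lambda k *: (xC k - xB k)) ->
  (forall k, 0 < lambda k < (4 * beta - gamma) / (2 * beta)) ->
  T zstar = zstar ->
  forall j,
    `|xA j - JB zstar| <= (1 + gamma / beta) * `|z 0 - zstar| /\
    `|xB j - JB zstar| <= (1 + gamma / beta) * `|z 0 - zstar|.
Proof.
move=> [mA _] [mB _] _ beta_gt0 C_coco g_gt0 g_le JA_res JB_res JC_res TE _ T_avg.
move=> xBE Cc xAE xCE zS lam_bd Tzs j.
set xs := JB zstar; set a := 2 * beta / (4 * beta - gamma) in T_avg.
have CJ k : C (JB (z k)) (c k) by rewrite -xBE.
have [cs Ccs] := cocoercive_resolvent_total Hip beta_gt0 C_coco g_gt0 JC_res xs.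
have xsE : JA (2 *: xs - zstar - gamma *: cs) = xs.
  apply: (resolvent_shift_eq Hip beta_gt0 C_coco JC_res Ccs).
  by move: (TE zstar cs Ccs); rewrite Tzs => /esym/(canRL (addrK _)); rewrite subKr.
have a_gt0 : 0 < a by rewrite divr_gt0 //; lra.
have z_le : forall k, `|z k - zstar| <= `|z 0 - zstar|.
  apply: (averaged_relaxed_iterates_le (lambda := lambda) T_avg a_gt0 Tzs) => k; last first.
    by rewrite /a invf_div lam_bd.
  rewrite zS (TE _ _ (CJ k)) -xBE -xAE -xCE [in RHS]addrCA.
  by rewrite [z k + (_ - _)]addrC addrK.
have xB_le : `|xB j - xs| <= `|z j - zstar|.
  by rewrite xBE; exact: resolvent_nonexpansive mB (ltW g_gt0) JB_res _ _.
have xA_le : `|xA j - xs| <= (1 + gamma / beta) * `|z j - zstar|.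
  rewrite xAE -xsE xBE /xs.
  exact (forward_reflected_resolvent_le Hip mA mB beta_gt0 C_coco g_gt0 JA_res JB_res (CJ j) Ccs).
have k_ge1 : 1 <= 1 + gamma / beta by rewrite lerDl divr_ge0 // ltW.
split.
  by apply: le_trans xA_le _; rewrite ler_wpM2l // (le_trans ler01 k_ge1).
by apply: le_trans xB_le (le_trans (z_le j) (ler_peMl _ k_ge1)).
Qed.
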